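(* Let $q>1$ and $m,n\in\mathbb{N}$. Then $U_{n,q}(e_m;z)$ is a polynomial in $z$ of degree at most $\min(m,n)$, and \[U_{n,q}(e_m;z)=\frac{[n-1]_q!}{[n+m-1]_q!}\sum_{s=1}^m S_q(m,s)\,[n]_q^s\,B_{n,q}(e_s;z).\]
   Context: For an integer $n\ge 0$ and $p>0$: $[n]_p=1+p+\dots+p^{n-1}$ ($[0]_p=0$), $[n]_p!=[1]_p\cdots[n]_p$ ($[0]_p!=1$), $\left[\begin{smallmatrix}n\\k\end{smallmatrix}\right]_p=\frac{[n]_p!}{[k]_p![n-k]_p!}$. For $z\in\mathbb{C}$, $(1-z)_p^n=\prod_{s=0}^{n-1}(1-p^s z)$ and $p_{n,k}(p;z)=\left[\begin{smallmatrix}n\\k\end{smallmatrix}\right]_p z^k(1-z)_p^{n-k}$. For $0<p<1$, $\int_0^1 g(t)\,d_pt=(1-p)\sum_{j=0}^\infty g(p^j)p^j$. For $q>1$, $n\in\mathbb{N}$ and $f:[0,1]\to\mathbb{C}$, \[U_{n,q}(f;z)=f(0)p_{n,0}(q;z)+f(1)p_{n,n}(q;z)+[n-1]_{q^{-1}}\sum_{k=1}^{n-1}q^{k-1}p_{n,k}(q;z)\int_0^1 p_{n-2,k-1}(q^{-1};q^{-1}t)\,f(q^{k-n}t)\,d_{q^{-1}}t\] (sum empty for $n=1$). $e_m(t)=t^m$. The numbers $S_q(m,s)$ are defined by the polynomial identity $\prod_{s=0}^{m-1}(q^sx+[s]_q)=\sum_{s=1}^m S_q(m,s)x^s$ in the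 variable $x$ (so that $[k]_q[k+1]_q\cdots[k+m-1]_q=\sum_{s=1}^mS_q(m,s)[k]_q^s$). $B_{n,q}(e_s;z)=\sum_{k=0}^n\left(\frac{[k]_q}{[n]_q}\right)^s p_{n,k}(q;z)$ is the $q$-Bernstein polynomial of $e_s$. *)

From HB Require Import structures.
From mathcomp Require Import all_boot all_order all_algebra.
From mathcomp Require Import all_classical all_reals.
From mathcomp Require Import topology normedtype sequences.
From mathcomp Require Import complex.
Set Implicit Arguments. Unset Strict Implicit. Unset Printing Implicit Defensive.
Import Order.TTheory GRing.Theory Num.Theory.
Import numFieldNormedType.Exports.
Local Open Scope ring_scope.

Section QDefs.
Variable F : fieldType.

Definition qint (p : F) (n : nat) : F := \sum_(i < n) p ^+ i.
Definition qfact (p : F) (n : nat) : F := \prod_(i < n) qint p i.+1.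
Definition qbinom (p : F) (n k : nat) : F :=
  qfact p n / (qfact p k * qfact p (n - k)).
Definition qpoch (p z : F) (n : nat) : F := \prod_(s < n) (1 - p ^+ s * z).
Definition pnk (p : F) (n k : nat) (z : F) : F :=
  qbinom p n k * z ^+ k * qpoch p z (n - k).
End QDefs.

Section Operator.
Variable R : realType.
Local Open Scope complex_scope.

(* Jackson q-integral on [0,1] of a real function, 0 < p < 1:
   (1-p) * sum_{j>=0} g(p^j) p^j  (value of the convergent series). *)
Definition jackson (p : R) (g : R -> R) : R :=
  (1 - p) * limn (fun N => \sum_(j < N) g (p ^+ j) * p ^+ j).

Definition jacksonC (p : R) (g : R -> R[i]) : R[i] :=
  (jackson p (fun t => complex.Re (g t)))%:C +
  'i * (jackson p (fun t => complex.Im (g t)))%:C.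

(* U_{n,q}(f; z) for f : [0,1] -> C (given as a function on R; only its
   values on [0,1] are used). *)
Definition Uop (q : R) (n : nat) (f : R -> R[i]) (z : R[i]) : R[i] :=
  f 0 * pnk (q%:C) n 0 z + f 1 * pnk (q%:C) n n z +
  (qint (q^-1) n.-1)%:C *
    \sum_(1 <= k < n)
      (q ^+ k.-1)%:C * pnk (q%:C) n k z *
      jacksonC (q^-1) (fun t => (pnk (q^-1) (n - 2) k.-1 (q^-1 * t))%:C *
                                  f (q ^- (n - k) * t)).

Definition emon (m : nat) : R -> R[i] := fun t => (t ^+ m)%:C.

Definition Sq (q : R) (m s : nat) : R :=
  (\prod_(j < m) ((q ^+ j)%:P * 'X + (qint q j)%:P))`_s.

Definition Bq_e (q : R) (n s : nat) (z : R[i]) : R[i] :=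
  \sum_(k < n.+1) ((qint q k / qint q n) ^+ s)%:C * pnk (q%:C) n k z.
End Operator.

From HB Require Import structures.
From mathcomp Require Import all_boot all_order all_algebra.
From mathcomp Require Import all_classical all_reals.
From mathcomp Require Import topology normedtype sequences.
From mathcomp Require Import complex.
From mathcomp Require Import zify ring.
Import Order.TTheory GRing.Theory Num.Theory.
Import numFieldNormedType.Exports.
Set Implicit Arguments. Unset Strict Implicit. Unset Printing Implicit Defensive.
Local Open Scope ring_scope.

(* For 0 < k < n the Jackson integral in U_{n,q}(e_m) integrates a polynomial
   of the form t^a (1 - q^-1 t)_{q^-1}^b, i.e. it is a q-Beta integral in base
   q^-1; rewriting its value with q-factorials in base q shows that
   U_{n,q}(e_m) = sum_k A_k p_{n,k}(q; z) with
   A_k = [n-1]_q! / [n+m-1]_q! * [k]_q [k+1]_q ... [k+m-1]_q,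
   which also holds for k = 0 and k = n.  Expanding the product through the
   numbers S_q(m, s) gives the identity.  For the degree, A_k = G(q^k) with
   deg G <= m, and by the q-binomial theorem the coefficient of z^j in
   sum_k G(q^k) p_{n,k}(q; z) is a multiple of
   sum_r G_r q^(rj) (1 - X)_q^j evaluated at X = q^-r, which vanishes for
   j > deg G because (1 - X)_q^j has the roots q^-r, r < j. *)

Section QCalculus.
Variables (F : fieldType) (p : F).
Hypothesis qint_neq0 : forall n, qint p n.+1 != 0.

Lemma qint0 : qint p 0 = 0. Proof. by rewrite /qint big_ord0. Qed.

Lemma qintD a b : qint p (a + b) = qint p a + p ^+ a * qint p b.
Proof.
rewrite /qint big_split_ord /= mulr_sumr; congr (_ + _).
by apply: eq_bigr => i _; rewrite exprD.
Qed.

Lemma qfact0 : qfact p 0 = 1. Proof. by rewrite /qfact big_ord0. Qed.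

Lemma qfactS n : qfact p n.+1 = qfact p n * qint p n.+1.
Proof. by rewrite /qfact big_ord_recr. Qed.

Lemma qfactD a b :
  qfact p (a + b) = qfact p a * \prod_(j < b) qint p (a + j).+1.
Proof. by rewrite /qfact big_split_ord. Qed.

Lemma qfact_neq0 n : qfact p n != 0.
Proof.
elim: n => [|n IH]; first by rewrite qfact0 oner_neq0.
by rewrite qfactS mulf_neq0.
Qed.

Lemma qbinom_n0 n : qbinom p n 0 = 1.
Proof. by rewrite /qbinom subn0 qfact0 mul1r divff // qfact_neq0. Qed.

Lemma qbinom_nn n : qbinom p n n = 1.
Proof. by rewrite /qbinom subnn qfact0 mulr1 divff // qfact_neq0. Qed.

Lemma qbinom_sub n k : (k <= n)%N -> qbinom p n (n - k) = qbinom p n k.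
Proof. by move=> hk; rewrite /qbinom subKn // [qfact p (n - k) * _]mulrC. Qed.

Lemma qbinom_mul n j k : (k <= j <= n)%N ->
  qbinom p n k * qbinom p (n - k) (j - k) = qbinom p n j * qbinom p j k.
Proof.
case/andP=> hkj hjn; rewrite /qbinom.
have -> : (n - k - (j - k) = n - j)%N by lia.
have := qfact_neq0 n; have := qfact_neq0 k; have := qfact_neq0 (n - k).
have := qfact_neq0 (j - k); have := qfact_neq0 (n - j); have := qfact_neq0 j.
by move=> *; field; do ![apply/andP; split] => //.
Qed.

(* The q-binomial coefficient extended by 0 outside [0, n], so that Pascal's
   rule holds without side conditions. *)
Definition qbin n k := if (k <= n)%N then qbinom p n k else 0.

Lemma qbin0 n : qbin n 0 = 1.
Proof. by rewrite /qbin leq0n qbinom_n0. Qed.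

Lemma qbinS n k : qbin n.+1 k.+1 = qbin n k.+1 + p ^+ (n - k) * qbin n k.
Proof.
rewrite /qbin; case: (ltngtP k n) => hk; last first.
- by rewrite hk ltnSn subnn expr0 mul1r add0r !qbinom_nn.
- by rewrite !ifF ?mulr0 ?addr0 //; lia.
rewrite !ifT; try lia.
have [d ->] : exists d, n = (k + d.+1)%N by exists (n - k.+1)%N; lia.
rewrite /qbinom.
have -> : ((k + d.+1).+1 - k.+1 = d.+1)%N by lia.
have -> : (k + d.+1 - k.+1 = d)%N by lia.
have -> : (k + d.+1 - k = d.+1)%N by lia.
rewrite (qfactS (k + d.+1)) (qfactS k) (qfactS d).
have -> : (k + d.+1).+1 = (d.+1 + k.+1)%N by lia.
rewrite qintD.
have := qfact_neq0 (k + d.+1); have := qfact_neq0 k; have := qfact_neq0 d.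
have := qint_neq0 k; have := qint_neq0 d.
by move=> *; field; do ![apply/andP; split] => //.
Qed.

Definition qpoch_poly n : {poly F} := \prod_(s < n) (1 - (p ^+ s)%:P * 'X).

Lemma horner_qpoch_poly n x : (qpoch_poly n).[x] = qpoch p x n.
Proof.
rewrite /qpoch_poly horner_prod; apply: eq_bigr => s _.
by rewrite hornerD hornerN hornerC hornerCM hornerX.
Qed.

Lemma coef_qpoch_poly n i :
  (qpoch_poly n)`_i = (-1) ^+ i * p ^+ 'C(i, 2) * qbin n i.
Proof.
elim: n i => [|n IH] [|i].
- by rewrite /qpoch_poly big_ord0 coefC qbin0 !mulr1.
- by rewrite /qpoch_poly big_ord0 coefC /qbin mulr0.
- rewrite /qpoch_poly big_ord_recr /= -/(qpoch_poly n) mulrBr mulr1 coefB.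
  by rewrite mulrCA mul_polyC coefZ coefMX /= mulr0 subr0 IH !qbin0.
rewrite /qpoch_poly big_ord_recr /= -/(qpoch_poly n) mulrBr mulr1 coefB.
rewrite mulrCA mul_polyC coefZ coefMX /= !IH qbinS.
case: (leqP i n) => hi; last by rewrite /qbin !ifF ?(mulr0, addr0, subr0) //; lia.
have -> : 'C(i.+1, 2) = ('C(i, 2) + i)%N by rewrite binS bin1 addnC.
rewrite -(subnKC hi) addKn !exprD exprS; ring.
Qed.

Lemma size_qpoch_poly n : (size (qpoch_poly n) <= n.+1)%N.
Proof.
apply/leq_sizeP => j hj; rewrite coef_qpoch_poly /qbin ifF ?mulr0 //; lia.
Qed.

Lemma root_qpoch_poly n r : p != 0 -> (r < n)%N -> (qpoch_poly n).[p ^- r] = 0.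
Proof.
move=> p0 hr; rewrite horner_qpoch_poly /qpoch (bigD1 (Ordinal hr)) //=.
by rewrite divff ?subrr ?mul0r // expf_neq0.
Qed.

End QCalculus.

Section QBernstein.
Variables (F : fieldType) (p : F).
Hypothesis qint_neq0 : forall n, qint p n.+1 != 0.

Definition qbernstein n (g : nat -> F) : {poly F} :=
  \sum_(k < n.+1) (g k * qbinom p n k)%:P * 'X^k * qpoch_poly p (n - k).

Lemma horner_qbernstein n g z :
  (qbernstein n g).[z] = \sum_(k < n.+1) g k * pnk p n k z.
Proof.
rewrite /qbernstein horner_sum; apply: eq_bigr => k _.
by rewrite hornerM hornerCM hornerXn horner_qpoch_poly /pnk !mulrA.
Qed.

Lemma coef_qbernstein n g j : (qbernstein n g)`_j =
  \sum_(k < n.+1) g k * qbinom p n k *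
    (if (j < k)%N then 0 else (qpoch_poly p (n - k))`_(j - k)).
Proof.
by rewrite /qbernstein coef_sum; apply: eq_bigr => k _; rewrite -mulrA coefCM coefXnM.
Qed.

Lemma coef_qbernstein_gt n g j : (n < j)%N -> (qbernstein n g)`_j = 0.
Proof.
move=> hj; rewrite coef_qbernstein big1 // => k _.
case: ifP => _; first by rewrite mulr0.
by rewrite coef_qpoch_poly // /qbin ifF ?mulr0 //; have := ltn_ord k; lia.
Qed.

Lemma coef_qbernstein_le n g j : (j <= n)%N -> (qbernstein n g)`_j =
  qbinom p n j * \sum_(i < j.+1) g (j - i)%N * (qpoch_poly p j)`_i.
Proof.
move=> hjn; rewrite coef_qbernstein.
pose H k := g k * qbinom p n k *
  (if (j < k)%N then 0 else (qpoch_poly p (n - k))`_(j - k)).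
rewrite -/(\sum_(k < n.+1) H k).
have -> : \sum_(k < n.+1) H k = \sum_(k < j.+1) H k.
  rewrite [RHS](big_ord_widen n.+1 H) ?ltnS // [RHS]big_mkcond /=.
  apply: eq_bigr => k _; case: ifP => // /negbT; rewrite -leqNgt => hk.
  by rewrite /H hk mulr0.
rewrite mulr_sumr [RHS](reindex_inj rev_ord_inj) /=; apply: eq_bigr => k _.
have hk : (k <= j)%N by rewrite -ltnS.
rewrite /H ltnNge hk /= subSS subKn // !coef_qpoch_poly // /qbin !ifT ?leq_subr //;
  last by lia.
rewrite qbinom_sub //.
transitivity (g k * (qbinom p n k * qbinom p (n - k) (j - k)) *
  ((-1) ^+ (j - k) * p ^+ 'C(j - k, 2))); first by ring.
rewrite qbinom_mul ?hk //; ring.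
Qed.

Lemma coef_qbernstein_horner n (G : {poly F}) j : p != 0 -> (size G <= j)%N ->
  (qbernstein n (fun k => G.[p ^+ k]))`_j = 0.
Proof.
move=> p0 hGj; have [hnj | hjn] := ltnP n j; first exact: coef_qbernstein_gt.
rewrite coef_qbernstein_le //.
have -> : \sum_(i < j.+1) G.[p ^+ (j - i)] * (qpoch_poly p j)`_i =
    \sum_(r < size G) G`_r * ((p ^+ r) ^+ j * (qpoch_poly p j).[p ^- r]).
  under eq_bigr do rewrite horner_coef mulr_suml.
  rewrite exchange_big /=; apply: eq_bigr => r _.
  rewrite (horner_coef_wide _ (size_qpoch_poly qint_neq0 j)) !mulr_sumr.
  apply: eq_bigr => i _.
  have hi : (i <= j)%N by rewrite -ltnS.
  have pr : p ^+ r \is a GRing.unit by rewrite unitfE expf_neq0.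
  rewrite [p ^+ (j - i) ^+ r]exprAC exprB // -exprVn; ring.
rewrite big1 ?mulr0 // => r _.
by rewrite root_qpoch_poly ?mulr0 //; apply: leq_trans (ltn_ord r) hGj.
Qed.

Lemma size_qbernstein_horner n (G : {poly F}) d : p != 0 -> (size G <= d.+1)%N ->
  (size (qbernstein n (fun k => G.[p ^+ k])) <= (minn d n).+1)%N.
Proof.
move=> p0 hG; apply/leq_sizeP => j hj.
have [hdj | hjd] := ltnP d j; first by apply: coef_qbernstein_horner; lia.
by apply: coef_qbernstein_gt; move: hj; rewrite /minn; case: ifP; lia.
Qed.
End QBernstein.

Section QIntegralPoly.
Variables (F : fieldType) (p : F).
Hypothesis qint_neq0 : forall n, qint p n.+1 != 0.

(* int_0^1 t^j d_p t = 1 / [j + 1]_p *)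
Definition qintegral_poly (P : {poly F}) :=
  \sum_(j < size P) P`_j / qint p j.+1.

Lemma qintegral_poly_wide N (P : {poly F}) : (size P <= N)%N ->
  qintegral_poly P = \sum_(j < N) P`_j / qint p j.+1.
Proof.
move=> hP; rewrite /qintegral_poly (big_ord_widen N (fun j => P`_j / qint p j.+1) hP).
rewrite big_mkcond; apply: eq_bigr => j _.
by case: ifP => // /negbT; rewrite -leqNgt => hj; rewrite nth_default // mul0r.
Qed.

Lemma qintegral_polyB (P Q : {poly F}) c :
  qintegral_poly (P - c *: Q) = qintegral_poly P - c * qintegral_poly Q.
Proof.
set N := (size P + size Q)%N.
have hP : (size P <= N)%N by rewrite leq_addr.
have hQ : (size Q <= N)%N by rewrite leq_addl.
have hPQ : (size (P - c *: Q)%R <= N)%N.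
  rewrite (leq_trans (size_polyD _ _)) // geq_max hP size_polyN.
  exact: leq_trans (size_scale_leq _ _) hQ.
rewrite !(qintegral_poly_wide hP, qintegral_poly_wide hQ, qintegral_poly_wide hPQ).
by rewrite mulr_sumr -sumrB; apply: eq_bigr => j _; rewrite coefB coefZ mulrBl mulrA.
Qed.

Lemma qintegral_polyZ (Q : {poly F}) c :
  qintegral_poly (c *: Q) = c * qintegral_poly Q.
Proof.
have := qintegral_polyB 0 Q (- c).
rewrite sub0r scaleNr opprK => ->.
by rewrite /qintegral_poly size_poly0 big_ord0 sub0r mulNr opprK.
Qed.

Lemma qintegral_polyXn a : qintegral_poly 'X^a = (qint p a.+1)^-1.
Proof.
rewrite /qintegral_poly size_polyXn big_ord_recr /= big1 => [|j _].
  by rewrite coefXn eqxx mul1r add0r.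
by rewrite coefXn (ltn_eqF (ltn_ord j)) mul0r.
Qed.

(* (1 - p X)_p^b, the q-analogue of (1 - t)^b in the Beta integral *)
Definition qbeta_poly b : {poly F} := \prod_(s < b) (1 - (p ^+ s.+1)%:P * 'X).

Lemma qintegral_poly_beta a b :
  qintegral_poly ('X^a * qbeta_poly b) = qfact p a * qfact p b / qfact p (a + b).+1.
Proof.
elim: b a => [|b IH] a.
  rewrite /qbeta_poly big_ord0 mulr1 qintegral_polyXn qfact0 addn0 qfactS.
  have := qfact_neq0 qint_neq0 a; have := qint_neq0 a.
  by move=> *; field; apply/andP.
have -> : 'X^a * qbeta_poly b.+1 =
    'X^a * qbeta_poly b - p ^+ b.+1 *: ('X^(a.+1) * qbeta_poly b).
  rewrite /qbeta_poly big_ord_recr /= -/(qbeta_poly b) -mul_polyC (exprS 'X a).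
  set Xa := 'X^a; set c := (p ^+ b.+1)%:P; ring.
rewrite qintegral_polyB !IH addSn !addnS !qfactS.
have -> : (a + b).+2 = (b.+1 + a.+1)%N by lia.
have := qfact_neq0 qint_neq0 a; have := qfact_neq0 qint_neq0 b.
have := qfact_neq0 qint_neq0 (a + b); have := qint_neq0 (a + b).
have := qint_neq0 a; have := qint_neq0 b.
have : qint p (b.+1 + a.+1) != 0 by rewrite addSn.
rewrite qintD => *; by field; do ![apply/andP; split] => //.
Qed.

End QIntegralPoly.

Lemma qint_geometric (F : fieldType) (p : F) n : (1 - p) * qint p n = 1 - p ^+ n.
Proof. by rewrite /qint -opprB mulNr -subrX1 opprB. Qed.

Lemma qint_gt0 (R : realFieldType) (p : R) n : 0 <= p -> 0 < qint p n.+1.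
Proof.
move=> p0; rewrite /qint big_ord_recl expr0 ltr_pwDl //.
by apply: sumr_ge0 => i _; rewrite exprn_ge0.
Qed.

Local Open Scope classical_set_scope.
Local Open Scope ring_scope.

Lemma jackson_horner (R : realType) (p : R) (P : {poly R}) : 0 < p < 1 ->
  jackson p (horner P) = qintegral_poly p P.
Proof.
case/andP=> p0 p1.
have partial_sums N : \sum_(i < N) P.[p ^+ i] * p ^+ i =
    \sum_(j < size P) P`_j * series (geometric 1 (p ^+ j.+1)) N.
  under eq_bigr do rewrite horner_coef mulr_suml.
  rewrite exchange_big /=; apply: eq_bigr => j _.
  rewrite /series /= big_mkord mulr_sumr; apply: eq_bigr => i _.
  by rewrite /geometric /= mul1r -mulrA -!exprM -exprD; congr (_ * _ ^+ _); lia.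
have cv : (fun N => \sum_(i < N) P.[p ^+ i] * p ^+ i) @ \oo -->
    \sum_(j < size P) P`_j * (1 * (1 - p ^+ j.+1)^-1).
  rewrite (funext partial_sums).
  apply: cvg_big => [|j _]; first exact: add_continuous.
  apply: cvgMl_tmp; apply: cvg_geometric_series.
  by rewrite ger0_norm ?exprn_ge0 ?ltW // exprn_ilt1 // ltW.
rewrite /jackson (cvg_lim _ cv) // mulr_sumr; apply: eq_bigr => j _.
rewrite mul1r -(qint_geometric p j.+1); field.
by rewrite gt_eqF ?qint_gt0 ?ltW // subr_eq0 eq_sym lt_eqF.
Qed.

Lemma bin2D x y : 'C(x + y, 2) = ('C(x, 2) + 'C(y, 2) + x * y)%N.
Proof.
elim: y => [|y IH]; first by rewrite addn0 bin0n muln0 !addn0.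
by rewrite addnS !binS !bin1 IH; lia.
Qed.

Section InteriorCoefficients.
Variables (R : realType) (q : R).
Hypothesis q_gt1 : 1 < q.

Let q_gt0 : 0 < q. Proof. exact: lt_trans q_gt1. Qed.
Let q_neq0 : q != 0. Proof. by rewrite gt_eqF. Qed.
Let qint_neq0 n : qint q n.+1 != 0.
Proof. by rewrite gt_eqF // qint_gt0 // ltW. Qed.
Let qintV_neq0 n : qint q^-1 n.+1 != 0.
Proof. by rewrite gt_eqF // qint_gt0 // invr_ge0 ltW. Qed.

Lemma qintV n : qint q^-1 n.+1 * q ^+ n = qint q n.+1.
Proof.
rewrite /qint mulr_suml (reindex_inj rev_ord_inj) /=; apply: eq_bigr => i _.
have hi : (i <= n)%N by rewrite -ltnS.
by rewrite subSS exprVn exprB ?unitfE //; field; rewrite !expf_neq0.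
Qed.

Lemma qfactV n : qfact q^-1 n * q ^+ 'C(n, 2) = qfact q n.
Proof.
elim: n => [|n IH]; first by rewrite !qfact0 bin0n expr0 mulr1.
by rewrite !qfactS binS bin1 exprD -IH -qintV; ring.
Qed.

Definition Ucoef n m k : R :=
  qfact q n.-1 / qfact q (n + m).-1 * \prod_(j < m) qint q (k + j).

Lemma Ucoef_qfact c e m : Ucoef (c + e).+2 m c.+1 =
  qfact q (c + e).+1 * qfact q (c + m) / (qfact q c * qfact q ((c + e).+1 + m)).
Proof.
rewrite /Ucoef /= addSn /=.
have -> : \prod_(j < m) qint q (c.+1 + j) = qfact q (c + m) / qfact q c.
  by rewrite qfactD mulrC mulKf ?qfact_neq0.
have := qfact_neq0 qint_neq0 c; have := qfact_neq0 qint_neq0 ((c + e).+1 + m).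
by move=> *; field; apply/andP.
Qed.

(* Passing from base q^-1 to base q: the powers of q cancel because
   C(a + m, 2) + C(c, 2) = C(a, 2) + C(c + m, 2) + (a - c) m for a = c + e + 1. *)
Lemma qfact_ratioV c e m :
  qfact q^-1 (c + e).+1 * qfact q^-1 (c + m) /
    (qfact q^-1 c * qfact q^-1 ((c + e).+1 + m)) * q^-1 ^+ (e.+1 * m) =
  qfact q (c + e).+1 * qfact q (c + m) / (qfact q c * qfact q ((c + e).+1 + m)).
Proof.
rewrite -!qfactV exprVn.
have -> : q ^+ 'C((c + e).+1 + m, 2) = q ^+ 'C((c + e).+1, 2) *
    q ^+ 'C(c + m, 2) * q ^+ (e.+1 * m) / q ^+ 'C(c, 2).
  apply: (@mulIf _ (q ^+ 'C(c, 2))); first by rewrite expf_neq0.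
  rewrite mulfVK ?expf_neq0 // -!exprD; congr (_ ^+ _).
  rewrite -addSn !bin2D; lia.
have := qfact_neq0 qintV_neq0 c; have := qfact_neq0 qintV_neq0 ((c + e).+1 + m).
have := qfact_neq0 qintV_neq0 (c + e).+1; have := qfact_neq0 qintV_neq0 (c + m).
have := expf_neq0 'C(c, 2) q_neq0; have := expf_neq0 (e.+1 * m) q_neq0.
have := expf_neq0 'C((c + e).+1, 2) q_neq0; have := expf_neq0 'C(c + m, 2) q_neq0.
by move=> *; field; do ![apply/andP; split] => //.
Qed.

Lemma jackson_pnk_monomial c e m :
  jackson q^-1 (fun t => pnk q^-1 (c + e) c (q^-1 * t) * (q ^- e.+1 * t) ^+ m) =
  qbinom q^-1 (c + e) c * q^-1 ^+ c * (q ^- e.+1) ^+ m *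
    (qfact q^-1 (c + m) * qfact q^-1 e / qfact q^-1 (c + m + e).+1).
Proof.
set a := qbinom q^-1 (c + e) c * q^-1 ^+ c * (q ^- e.+1) ^+ m.
have -> : (fun t => pnk q^-1 (c + e) c (q^-1 * t) * (q ^- e.+1 * t) ^+ m) =
    horner (a *: ('X^(c + m) * qbeta_poly q^-1 e)).
  apply: funext => t.
  rewrite hornerZ hornerM hornerXn /qbeta_poly horner_prod /pnk /qpoch addKn.
  under [in RHS]eq_bigr do rewrite hornerD hornerN hornerC hornerCM hornerX.
  under [in LHS]eq_bigr do rewrite mulrA -exprSr.
  by rewrite /a !exprMn exprD; ring.
rewrite jackson_horner; last by rewrite invr_gt0 q_gt0 invf_lt1.
by rewrite qintegral_polyZ qintegral_poly_beta.
Qed.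

Lemma Ucoef_interior c e m :
  qint q^-1 (c + e).+1 * q ^+ c *
    jackson q^-1 (fun t => pnk q^-1 (c + e) c (q^-1 * t) * (q ^- e.+1 * t) ^+ m) =
  Ucoef (c + e).+2 m c.+1.
Proof.
rewrite jackson_pnk_monomial Ucoef_qfact -qfact_ratioV /qbinom addKn.
have -> : (c + m + e).+1 = ((c + e).+1 + m)%N by lia.
rewrite -exprVn -exprM (qfactS q^-1 (c + e)).
have := qfact_neq0 qintV_neq0 c; have := qfact_neq0 qintV_neq0 ((c + e).+1 + m).
have := qfact_neq0 qintV_neq0 e; have := qfact_neq0 qintV_neq0 (c + e).
have := qintV_neq0 (c + e); have := expf_neq0 c q_neq0.
rewrite exprVn => *; by field; do ![apply/andP; split] => //.
Qed.

End InteriorCoefficients.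

Lemma size_prod_linear (F : comNzRingType) (a b : nat -> F) m :
  (size (\prod_(j < m) ((a j)%:P * 'X + (b j)%:P))%R <= m.+1)%N.
Proof.
apply: leq_trans (size_poly_prod_leq _ _) _; rewrite card_ord.
apply: leq_trans (leq_sub2r _ (_ : _ <= (m * 2).+1)%N) _; last by lia.
rewrite ltnS (_ : m * 2 = \sum_(j < m) 2)%N; last by rewrite sum_nat_const card_ord.
apply: leq_sum => j _.
by rewrite size_MXaddC; case: ifP => // _; rewrite ltnS size_polyC_leq1.
Qed.

Local Open Scope complex_scope.

Lemma qint_complex (R : rcfType) (p : R) n : qint p%:C n = (qint p n)%:C.
Proof. by rewrite /qint rmorph_sum; apply: eq_bigr => i _; rewrite rmorphXn. Qed.

Lemma jacksonC_real (R : realType) (p : R) (h : R -> R) :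
  jacksonC p (fun t => (h t)%:C) = (jackson p h)%:C.
Proof.
rewrite /jacksonC.
have -> : jackson p (fun t => complex.Im (h t)%:C) = 0.
  rewrite /jackson /=.
  have -> : (fun N => \sum_(j < N) 0 * p ^+ j) = (fun=> 0 : R).
    by apply: funext => N; rewrite big1 // => j _; rewrite mul0r.
  by rewrite (cvg_lim _ (cvg_cst 0)) // mulr0.
by rewrite mulr0 addr0.
Qed.

Section Main.
Variables (R : realType) (q : R).
Hypothesis q_gt1 : 1 < q.

Let q_gt0 : 0 < q. Proof. exact: lt_trans q_gt1. Qed.
Let q_neq0 : q != 0. Proof. by rewrite gt_eqF. Qed.
Let qint_neq0 n : qint q n.+1 != 0.
Proof. by rewrite gt_eqF // qint_gt0 // ltW. Qed.

Lemma Ucoef0 n m : (0 < m)%N -> Ucoef q n m 0 = 0.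
Proof. by case: m => // m _; rewrite /Ucoef big_ord_recl /= qint0 mul0r mulr0. Qed.

Lemma Ucoef_id n m : (0 < n)%N -> Ucoef q n m n = 1.
Proof.
case: n => // n _; rewrite /Ucoef addSn /= qfactD.
under eq_bigr do rewrite addSn.
have := qfact_neq0 qint_neq0 n.
have : \prod_(i < m) qint q (n + i).+1 != 0 by apply/prodf_neq0.
by move=> *; field; apply/andP.
Qed.

Lemma Uop_emon n m z : (0 < m)%N -> (0 < n)%N ->
  Uop q n (emon m) z = \sum_(k < n.+1) (Ucoef q n m k)%:C * pnk q%:C n k z.
Proof.
move=> m_gt0 n_gt0.
rewrite /Uop {1 2}/emon expr0n expr1n eqn0Ngt m_gt0 /=.
rewrite -(big_mkord xpredT (fun k => (Ucoef q n m k)%:C * pnk q%:C n k z)).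
rewrite big_nat_recr // (big_ltn n_gt0) Ucoef0 // Ucoef_id // mulr0n !rmorph0 !rmorph1 /=.
rewrite mul0r !add0r mul1r addrC; congr (_ + _).
rewrite mulr_sumr; apply: eq_big_nat => k /andP [k_gt0 k_lt_n].
have [c kE] : exists c, k = c.+1 by exists k.-1; lia.
have [e nE] : exists e, n = (c + e).+2 by exists (n - k - 1)%N; lia.
rewrite kE nE /=.
have -> : ((c + e).+2 - 2 = c + e)%N by lia.
have -> : ((c + e).+2 - c.+1 = e.+1)%N by lia.
under eq_fun do rewrite /emon -rmorphM.
rewrite jacksonC_real -(Ucoef_interior q_gt1) !rmorphM; ring.
Qed.

Lemma Ucoef_horner n m :
  exists G : {poly R}, (size G <= m.+1)%N /\ forall k, Ucoef q n m k = G.[q ^+ k].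
Proof.
have q1_neq0 : q - 1 != 0 by rewrite subr_eq0 gt_eqF.
have qintE k : qint q k = (q ^+ k - 1) / (q - 1).
  by rewrite subrX1 mulrC mulKf.
exists ((qfact q n.-1 / qfact q (n + m).-1)%:P *
  \prod_(j < m) ((q ^+ j / (q - 1))%:P * 'X + (- (q - 1)^-1)%:P)); split.
  rewrite mul_polyC (leq_trans (size_scale_leq _ _)) //.
  exact: (size_prod_linear (fun j => q ^+ j / (q - 1)) (fun=> - (q - 1)^-1)).
move=> k; rewrite /Ucoef hornerCM horner_prod; congr (_ * _).
apply: eq_bigr => j _; rewrite hornerD hornerCM hornerX hornerC.
by rewrite qintE exprD; field.
Qed.

Lemma sum_Sq_expansion m x : (0 < m)%N ->
  \sum_(1 <= s < m.+1) Sq q m s * x ^+ s = \prod_(j < m) (q ^+ j * x + qint q j).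
Proof.
move=> m_gt0.
set P := \prod_(j < m) ((q ^+ j)%:P * 'X + (qint q j)%:P).
have Sq0 : Sq q m 0 = 0.
  rewrite /Sq -/P -horner_coef0 horner_prod; case: m m_gt0 {P} => // m _.
  by rewrite big_ord_recl /= hornerD hornerCM hornerX hornerC qint0 mulr0 addr0 mul0r.
have -> : \prod_(j < m) (q ^+ j * x + qint q j) = P.[x].
  rewrite horner_prod; apply: eq_bigr => j _.
  by rewrite hornerD hornerCM hornerX hornerC.
rewrite (horner_coef_wide _ (size_prod_linear _ _ m)).
rewrite -(big_mkord xpredT (fun s => P`_s * x ^+ s)).
by rewrite [in RHS]big_ltn // -/(Sq q m 0) Sq0 mul0r add0r.
Qed.

Lemma Ucoef_Sq n m k : (0 < m)%N -> Ucoef q n m k =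
  qfact q n.-1 / qfact q (n + m).-1 * \sum_(1 <= s < m.+1) Sq q m s * qint q k ^+ s.
Proof.
move=> m_gt0; rewrite sum_Sq_expansion // /Ucoef; congr (_ * _).
by apply: eq_bigr => j _; rewrite addnC qintD addrC.
Qed.

Lemma Uop_emon_poly n m : (0 < m)%N -> (0 < n)%N ->
  exists P : {poly R[i]}, (size P <= (minn m n).+1)%N /\
    forall z, Uop q n (emon m) z = P.[z].
Proof.
move=> m_gt0 n_gt0; have [G [sizeG UG]] := Ucoef_horner n m.
set GC := map_poly (real_complex R) G.
exists (qbernstein q%:C n (fun k => GC.[q%:C ^+ k])); split.
  apply: size_qbernstein_horner; rewrite ?size_map_poly ?fmorph_eq0 //.
  by move=> j; rewrite qint_complex fmorph_eq0.
move=> z; rewrite Uop_emon // horner_qbernstein; apply: eq_bigr => k _.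
by rewrite -rmorphXn horner_map UG.
Qed.

Lemma sum_Sq_Bq_e n m (c : R) z : (0 < n)%N ->
  c%:C * \sum_(1 <= s < m.+1) (Sq q m s * qint q n ^+ s)%:C * Bq_e q n s z =
  \sum_(k < n.+1)
    (c * \sum_(1 <= s < m.+1) Sq q m s * qint q k ^+ s)%:C * pnk q%:C n k z.
Proof.
case: n => // n _; rewrite /Bq_e mulr_sumr.
under eq_bigr do rewrite mulr_sumr mulr_sumr.
rewrite exchange_big /=; apply: eq_bigr => k _.
under eq_bigr do rewrite 2!mulrA.
rewrite -mulr_suml rmorphM rmorph_sum mulr_sumr; congr (_ * _).
apply: eq_big_nat => s _; rewrite -!rmorphM expr_div_n.
by congr _%:C; field; rewrite expf_neq0.
Qed.

End Main.

Theorem mainTheorem5 (R : realType) (q : R) (m n : nat) :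
  1 < q -> (0 < m)%N -> (0 < n)%N ->
  (exists P : {poly R[i]}, (size P <= (minn m n).+1)%N /\
     forall z : R[i], Uop q n (emon m) z = P.[z]) /\
  (forall z : R[i],
     Uop q n (emon m) z =
     (qfact q n.-1 / qfact q (n + m).-1)%:C *
       \sum_(1 <= s < m.+1) (Sq q m s * qint q n ^+ s)%:C * Bq_e q n s z).
Proof.
move=> q_gt1 m_gt0 n_gt0; split; first exact: Uop_emon_poly.
move=> z; rewrite Uop_emon // sum_Sq_Bq_e //.
by apply: eq_bigr => k _; rewrite Ucoef_Sq.
Qed.
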